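(* For $a\in\mathbb{Q}$, $a>0$, let $\mathcal{R}_a$ be the rectangle with vertices $(0,0)$, $(0,1)$, $(a,0)$, $(a,1)$. Then the set of positive $a\in\mathbb{Q}$ for which there are infinitely many points $(x,y)\in\mathbb{Q}^2$ with $0<x<a$ and $0<y<1$ whose distances to each of the four vertices of $\mathcal{R}_a$ are rational is dense in $\mathbb{R}_{+}=(0,\infty)$.
   Context: No further context is needed. *)

From Stdlib Require Import Reals QArith Qreals List.
Open Scope R_scope.

Definition IsRat (x : R) : Prop := exists q : Q, x = Q2R q.

Definition dist2 (p q : R * R) : R :=
  sqrt ((fst p - fst q) ^ 2 + (snd p - snd q) ^ 2).

Definition good_point (a : R) (p : R * R) : Prop :=
  IsRat (fst p) /\ IsRat (snd p) /\
  0 < fst p < a /\ 0 < snd p < 1 /\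
  IsRat (dist2 p (0, 0)) /\ IsRat (dist2 p (0, 1)) /\
  IsRat (dist2 p (a, 0)) /\ IsRat (dist2 p (a, 1)).

Definition infinite_set (P : R * R -> Prop) : Prop :=
  forall l : list (R * R), exists p, P p /\ ~ In p l.

Definition S_good (a : R) : Prop :=
  IsRat a /\ 0 < a /\ infinite_set (good_point a).

(* For rational c >= 2, each rational X in (0, c) such that X^2 + 1 and (c - X)^2 + 1
   are rational squares gives the good point (X/2, 1/2) of R_(c/2) and the good point
   (1/c, X/c) of R_(2/c); if such c are dense in [2, +oo), then c/2 and 2/c sweep a
   dense subset of (0, +oo).

   Writing X = c/2 + Y, both square conditions hold for Y = -w (Q - 1) / (2 Q (Q + 1))
   whenever (Q, w) is a rational point of the elliptic curve
   w^2 = Q^3 + (2 + c^2) Q^2 + Q, and they are preserved by the involution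
   Y |-> (1 + c^2/4) / Y.  One of Y and its image lies in (-c/2, c/2) unless Y^2 falls
   in a bounded band, and doubling the point always moves Y^2 out of that band.
   Starting from a point whose abscissa has 2-adic valuation -4, every doubling lowers
   this valuation by 2, so the resulting values of Y^2 have pairwise distinct 2-adic
   valuations and the X are pairwise distinct.  Such a starting point exists for
   c = t - 1/t with t = (8j - q) q / (q^2 - 16 j^2), j and q odd, and these c are dense
   in [2, +oo). *)

From Stdlib Require Import Reals QArith Qreals List.
From Stdlib Require Import Lra Lia Psatz ZArith Classical.
Open Scope R_scope.

Lemma IsRat_IZR (z : Z) : IsRat (IZR z).
Proof. exists (inject_Z z). unfold Q2R, inject_Z; simpl. field. Qed.

Lemma IsRat_plus x y : IsRat x -> IsRat y -> IsRat (x + y).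
Proof. intros [a ->] [b ->]. exists (a + b)%Q. now rewrite Q2R_plus. Qed.

Lemma IsRat_mult x y : IsRat x -> IsRat y -> IsRat (x * y).
Proof. intros [a ->] [b ->]. exists (a * b)%Q. now rewrite Q2R_mult. Qed.

Lemma IsRat_opp x : IsRat x -> IsRat (- x).
Proof. intros [a ->]. exists (- a)%Q. now rewrite Q2R_opp. Qed.

Lemma IsRat_minus x y : IsRat x -> IsRat y -> IsRat (x - y).
Proof. intros. apply IsRat_plus; auto using IsRat_opp. Qed.

Lemma IsRat_inv x : IsRat x -> IsRat (/ x).
Proof.
  intros [a ->]. destruct (Qeq_dec a 0) as [Ha|Ha].
  - exists 0%Q. rewrite (Qeq_eqR _ _ Ha), RMicromega.Q2R_0. apply Rinv_0.
  - exists (/ a)%Q. now rewrite Q2R_inv.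
Qed.

Lemma IsRat_div x y : IsRat x -> IsRat y -> IsRat (x / y).
Proof. intros. apply IsRat_mult; auto using IsRat_inv. Qed.

Lemma IsRat_sqrt_square x y : IsRat y -> x = y ^ 2 -> IsRat (sqrt x).
Proof.
  intros [b Hb] ->. rewrite <- Rsqr_pow2, sqrt_Rsqr_abs. unfold Rabs.
  destruct Rcase_abs; [apply IsRat_opp|]; now exists b.
Qed.

Ltac israt := repeat first [assumption | apply IsRat_IZR | apply IsRat_div
  | apply IsRat_mult | apply IsRat_plus | apply IsRat_minus | apply IsRat_opp
  | apply IsRat_inv].

Lemma Rlt_div_r a b d : 0 < d -> a * d < b -> a < b / d.
Proof.
  intros Hd H. apply Rmult_lt_reg_r with d; auto.
  unfold Rdiv. rewrite Rmult_assoc, Rinv_l; lra.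
Qed.

Lemma Rlt_div_l a b d : 0 < d -> b < a * d -> b / d < a.
Proof.
  intros Hd H. apply Rmult_lt_reg_r with d; auto.
  unfold Rdiv. rewrite Rmult_assoc, Rinv_l; lra.
Qed.

(** * 2-adic valuations *)

Definition val2 (x : R) (e : Z) : Prop :=
  exists a b : Z, Z.odd a = true /\ Z.odd b = true /\ x = IZR a / IZR b * powerRZ 2 e.

Definition val2_ge (x : R) (e : Z) : Prop :=
  exists a b : Z, Z.odd b = true /\ x = IZR a / IZR b * powerRZ 2 e.

Lemma IZR_odd_neq0 (a : Z) : Z.odd a = true -> IZR a <> 0.
Proof. intros Ha E. apply eq_IZR_R0 in E. now subst. Qed.

Lemma Z_odd_mul a b : Z.odd a = true -> Z.odd b = true -> Z.odd (a * b) = true.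
Proof. intros Ha Hb. now rewrite Z.odd_mul, Ha, Hb. Qed.

Lemma powerRZ2_pos e : 0 < powerRZ 2 e.
Proof. apply powerRZ_lt. lra. Qed.

Lemma powerRZ2_IZR (k : Z) : (0 <= k)%Z -> powerRZ 2 k = IZR (2 ^ k).
Proof.
  intros Hk. rewrite <- (Z2Nat.id k Hk), <- pow_powerRZ, pow_IZR. reflexivity.
Qed.

Lemma powerRZ2_split e f : powerRZ 2 f = powerRZ 2 (f - e) * powerRZ 2 e.
Proof. rewrite <- powerRZ_add by lra. f_equal. lia. Qed.

Lemma val2_neq0 x e : val2 x e -> x <> 0.
Proof.
  intros (a & b & Ha & Hb & ->).
  pose proof (IZR_odd_neq0 a Ha). pose proof (IZR_odd_neq0 b Hb).
  pose proof (powerRZ2_pos e).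
  repeat apply Rmult_integral_contrapositive_currified; auto with real.
Qed.

Lemma val2_unique x e f : val2 x e -> val2 x f -> e = f.
Proof.
  enough (Hlt : forall e f, val2 x e -> val2 x f -> (e < f)%Z -> False).
  { intros He Hf. destruct (Z.lt_trichotomy e f) as [H|[H|H]]; auto;
      exfalso; eauto. }
  clear e f. intros e f (a & b & Ha & Hb & Ex) (c & d & Hc & Hd & Ey) Hlt.
  rewrite Ex, (powerRZ2_split e f), (powerRZ2_IZR (f - e)) in Ey by lia.
  pose proof (IZR_odd_neq0 b Hb). pose proof (IZR_odd_neq0 d Hd).
  pose proof (powerRZ2_pos e).
  assert (E : IZR (a * d) = IZR (c * b * 2 ^ (f - e))).
  { rewrite !mult_IZR.
    apply (Rmult_eq_reg_r (powerRZ 2 e / (IZR b * IZR d))).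
    - transitivity (IZR a / IZR b * powerRZ 2 e); [field; auto|].
      rewrite Ey. field; auto.
    - apply Rmult_integral_contrapositive_currified; [lra|].
      apply Rinv_neq_0_compat, Rmult_integral_contrapositive_currified; auto. }
  apply eq_IZR in E. apply (f_equal Z.odd) in E.
  rewrite Z_odd_mul, !Z.odd_mul, Z.odd_pow in E by (auto || lia).
  simpl in E. now rewrite Bool.andb_false_r in E.
Qed.

Lemma val2_mul x y e f : val2 x e -> val2 y f -> val2 (x * y) (e + f).
Proof.
  intros (a & b & Ha & Hb & ->) (c & d & Hc & Hd & ->).
  exists (a * c)%Z, (b * d)%Z. repeat split; try now apply Z_odd_mul.
  rewrite powerRZ_add, !mult_IZR by lra.
  pose proof (IZR_odd_neq0 b Hb). pose proof (IZR_odd_neq0 d Hd). field. auto.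
Qed.

Lemma val2_inv x e : val2 x e -> val2 (/ x) (- e).
Proof.
  intros (a & b & Ha & Hb & ->). exists b, a. repeat split; auto.
  pose proof (IZR_odd_neq0 b Hb). pose proof (IZR_odd_neq0 a Ha).
  pose proof (powerRZ2_pos e).
  rewrite powerRZ_neg'. field. repeat split; lra || auto.
Qed.

Lemma val2_div x y e f : val2 x e -> val2 y f -> val2 (x / y) (e - f).
Proof.
  intros. replace (e - f)%Z with (e + - f)%Z by lia.
  apply val2_mul; auto using val2_inv.
Qed.

Lemma val2_four : val2 4 2.
Proof. exists 1%Z, 1%Z. repeat split. simpl. field. Qed.

Lemma val2_ge_of_val2 x e : val2 x e -> val2_ge x e.
Proof. intros (a & b & Ha & Hb & ->). now exists a, b. Qed.

Lemma val2_ge_IZR z : val2_ge (IZR z) 0.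
Proof. exists z, 1%Z. split; auto. simpl. field. Qed.

Lemma val2_ge_plus x y e : val2_ge x e -> val2_ge y e -> val2_ge (x + y) e.
Proof.
  intros (a & b & Hb & ->) (c & d & Hd & ->).
  exists (a * d + c * b)%Z, (b * d)%Z. split; [now apply Z_odd_mul|].
  rewrite plus_IZR, !mult_IZR.
  pose proof (IZR_odd_neq0 b Hb). pose proof (IZR_odd_neq0 d Hd). field. auto.
Qed.

Lemma val2_ge_mul x y e f : val2_ge x e -> val2_ge y f -> val2_ge (x * y) (e + f).
Proof.
  intros (a & b & Hb & ->) (c & d & Hd & ->).
  exists (a * c)%Z, (b * d)%Z. split; [now apply Z_odd_mul|].
  rewrite powerRZ_add, !mult_IZR by lra.
  pose proof (IZR_odd_neq0 b Hb). pose proof (IZR_odd_neq0 d Hd). field. auto.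
Qed.

Lemma val2_plus_ge x y e f : val2 x e -> val2_ge y f -> (e < f)%Z -> val2 (x + y) e.
Proof.
  intros (a & b & Ha & Hb & ->) (c & d & Hd & ->) Hlt.
  exists (a * d + c * b * 2 ^ (f - e))%Z, (b * d)%Z. repeat split.
  - rewrite Z.odd_add, Z_odd_mul, !Z.odd_mul, Z.odd_pow by (auto || lia).
    simpl. now rewrite Bool.andb_false_r.
  - now apply Z_odd_mul.
  - rewrite plus_IZR, !mult_IZR, <- powerRZ2_IZR, (powerRZ2_split e f) by lia.
    pose proof (IZR_odd_neq0 b Hb). pose proof (IZR_odd_neq0 d Hd). field. auto.
Qed.

Lemma val2_plus_IZR x e z : val2 x e -> (e < 0)%Z -> val2 (x + IZR z) e.
Proof. intros Hx He. apply val2_plus_ge with 0%Z; auto using val2_ge_IZR. Qed.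

(** * The curve w^2 = Q^3 + A Q^2 + Q *)

Definition curve_rhs (A Q : R) : R := Q * Q * Q + A * Q * Q + Q.
Definition dbl_slope (A Q w : R) : R := (3 * Q * Q + 2 * A * Q + 1) / (2 * w).
Definition dbl_x (A Q w : R) : R := dbl_slope A Q w * dbl_slope A Q w - A - 2 * Q.
Definition dbl_y (A Q w : R) : R := dbl_slope A Q w * (Q - dbl_x A Q w) - w.

Section Curve.
Variables A Q w : R.
Hypothesis on_curve : w * w = curve_rhs A Q.

Lemma curve_rhs_neq0 : w <> 0 -> curve_rhs A Q <> 0.
Proof. intros Hw. rewrite <- on_curve. now apply Rmult_integral_contrapositive_currified. Qed.

Lemma dbl_x_eq : w <> 0 -> dbl_x A Q w = (Q * Q - 1) ^ 2 / (4 * curve_rhs A Q).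
Proof.
  intros Hw. pose proof (curve_rhs_neq0 Hw).
  unfold dbl_x. replace (dbl_slope A Q w * dbl_slope A Q w)
    with ((3 * Q * Q + 2 * A * Q + 1) ^ 2 / (4 * (w * w))) by (unfold dbl_slope; field; auto).
  rewrite on_curve. unfold curve_rhs in *. field. auto.
Qed.

Lemma dbl_on_curve : w <> 0 ->
  dbl_y A Q w * dbl_y A Q w = curve_rhs A (dbl_x A Q w).
Proof.
  intros Hw. pose proof (curve_rhs_neq0 Hw).
  unfold dbl_y. rewrite dbl_x_eq by auto.
  set (l := dbl_slope A Q w). set (Q' := (Q * Q - 1) ^ 2 / (4 * curve_rhs A Q)).
  assert (Hll : l * l = (3 * Q * Q + 2 * A * Q + 1) ^ 2 / (4 * curve_rhs A Q))
    by (unfold l, dbl_slope; rewrite <- on_curve; field; auto).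
  assert (Hlw : l * w = (3 * Q * Q + 2 * A * Q + 1) / 2)
    by (unfold l, dbl_slope; field; auto).
  replace ((l * (Q - Q') - w) * (l * (Q - Q') - w))
    with (l * l * (Q - Q') ^ 2 - 2 * (l * w) * (Q - Q') + w * w) by ring.
  rewrite Hll, Hlw, on_curve. unfold Q'. unfold curve_rhs in *. field. auto.
Qed.

(* (1/Q, -w/Q^2) is (Q, w) plus the 2-torsion point (0, 0). *)
Lemma inv_on_curve : Q <> 0 -> (- w / (Q * Q)) * (- w / (Q * Q)) = curve_rhs A (/ Q).
Proof.
  intros HQ. replace ((- w / (Q * Q)) * (- w / (Q * Q))) with (w * w / (Q * Q * Q * Q))
    by (field; auto).
  rewrite on_curve. unfold curve_rhs. field. auto.
Qed.

End Curve.

Lemma IsRat_dbl A Q w : IsRat A -> IsRat Q -> IsRat w ->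
  IsRat (dbl_x A Q w) /\ IsRat (dbl_y A Q w).
Proof.
  intros. assert (IsRat (dbl_x A Q w)) by (unfold dbl_x, dbl_slope; israt).
  split; auto. unfold dbl_y, dbl_slope. israt.
Qed.

(** * Offsets from the midpoint *)

Definition offset (Q w : R) : R := - w * (Q - 1) / (2 * Q * (Q + 1)).
Definition offset_sq (A Q : R) : R :=
  (Q * Q + A * Q + 1) * ((Q - 1) * (Q - 1)) / (4 * Q * ((Q + 1) * (Q + 1))).

Lemma offset_sq_eq A Q w : w * w = curve_rhs A Q -> 0 < Q ->
  offset Q w * offset Q w = offset_sq A Q.
Proof.
  intros H HQ. unfold offset, offset_sq.
  replace (- w * (Q - 1) / (2 * Q * (Q + 1)) * (- w * (Q - 1) / (2 * Q * (Q + 1))))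
    with (w * w * (Q - 1) * (Q - 1) / (4 * Q * Q * (Q + 1) * (Q + 1))) by (field; lra).
  rewrite H. unfold curve_rhs. field. lra.
Qed.

Lemma plus_inv_ge2 Q : 0 < Q -> 2 <= Q + / Q.
Proof.
  intros HQ. replace (Q + / Q) with (2 + (Q - 1) ^ 2 / Q) by (field; lra).
  assert (0 <= (Q - 1) ^ 2 / Q) by (apply Rle_mult_inv_pos; [apply pow2_ge_0 | lra]).
  lra.
Qed.

Definition band_poly (c z : R) : R :=
  c ^ 2 * z ^ 2 - (8 * c ^ 2 + 16) * z - (4 * c ^ 4 + 20 * c ^ 2 + 32).

Section Band.
Variables c Q : R.
Hypothesis Q_pos : 0 < Q.
Let z := Q + / Q.

Lemma quarter_sub_offset_sq :
  c * c / 4 - offset_sq (2 + c * c) Q = (4 + 4 * c ^ 2 - z ^ 2) / (4 * (z + 2)).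
Proof.
  pose proof (plus_inv_ge2 Q Q_pos). unfold offset_sq, z.
  field. repeat split; nra.
Qed.

Lemma band_top_sub_offset_sq : c <> 0 ->
  (c / 2 + 2 / c) ^ 2 - offset_sq (2 + c * c) Q =
  - band_poly c z / (4 * c ^ 2 * (z + 2)).
Proof.
  intros Hc. pose proof (plus_inv_ge2 Q Q_pos). unfold band_poly, offset_sq, z.
  field. repeat split; nra.
Qed.

Lemma dbl_x_in_z A : 0 < A ->
  (Q * Q - 1) ^ 2 / (4 * curve_rhs A Q) = (z ^ 2 - 4) / (4 * (z + A)).
Proof.
  intros HA. unfold curve_rhs, z. field. repeat split; nra.
Qed.

End Band.

Lemma plus_inv_sq_lt c q : 0 < q -> 1 < 2 * c * q -> q < 2 * c ->
  (q + / q) ^ 2 < 4 + 4 * c ^ 2.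
Proof.
  intros Hq Hlo Hhi.
  assert (Habs : (q * q - 1) ^ 2 < (2 * c * q) ^ 2).
  { assert (q * q < 2 * c * q) by nra.
    assert (0 < (2 * c * q - (q * q - 1)) * (2 * c * q + (q * q - 1))) by nra.
    nra. }
  replace ((q + / q) ^ 2) with (((q * q - 1) ^ 2 + 4 * (q * q)) / (q * q)) by (field; lra).
  apply Rlt_div_l; nra.
Qed.

Section DoublingInZ.
Variables c z : R.
Hypothesis c_ge2 : 2 <= c.
Hypothesis z_ge2 : 2 <= z.

Let q := (z ^ 2 - 4) / (4 * (z + (2 + c ^ 2))).

Lemma dbl_z_lower : 4 + 4 * c ^ 2 <= z ^ 2 -> 1 < 2 * c * q.
Proof.
  intros Hz. unfold q.
  assert (Hzc : 2 * c <= z) by nra.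
  replace (2 * c * ((z ^ 2 - 4) / (4 * (z + (2 + c ^ 2)))))
    with (2 * c * (z ^ 2 - 4) / (4 * (z + (2 + c ^ 2)))) by (field; nra).
  apply Rlt_div_r; [nra|]. rewrite Rmult_1_l.
  assert (z * (2 * c * z - 4) >= 2 * c * (4 * c ^ 2 - 4)) by nra.
  nra.
Qed.

Lemma dbl_z_upper : band_poly c z <= 0 -> q < 2 * c.
Proof.
  unfold band_poly. intros Hz. unfold q. apply Rlt_div_l; [nra|].
  assert (K1 : 8 * c ^ 2 + 16 <= 8 * c ^ 3) by nra.
  assert (K2 : 4 * c ^ 4 + 16 * c ^ 2 + 32 < 8 * c ^ 3 * (2 + c ^ 2)) by nra.
  apply Rmult_lt_reg_l with (c ^ 2); nra.
Qed.

End DoublingInZ.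

(* For Y^2 = offset_sq (2 + c^2) Q: neither Y nor (1 + c^2/4) / Y lies in (-c/2, c/2). *)
Definition in_band (c Q : R) : Prop :=
  c * c / 4 <= offset_sq (2 + c * c) Q <= (c / 2 + 2 / c) ^ 2.

Lemma in_band_z c Q : 0 < c -> 0 < Q -> in_band c Q ->
  4 + 4 * c ^ 2 <= (Q + / Q) ^ 2 /\ band_poly c (Q + / Q) <= 0.
Proof.
  intros Hc HQ [Hlo Hhi].
  pose proof (plus_inv_ge2 Q HQ) as Hz.
  pose proof (quarter_sub_offset_sq c Q HQ) as E1.
  pose proof (band_top_sub_offset_sq c Q HQ ltac:(lra)) as E2.
  set (z := Q + / Q) in *. split.
  - assert (E : 4 + 4 * c ^ 2 - z ^ 2
                = (c * c / 4 - offset_sq (2 + c * c) Q) * (4 * (z + 2)))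
      by (rewrite E1; field; lra).
    assert (0 < 4 * (z + 2)) by lra. nra.
  - assert (E : band_poly c z
                = - ((c / 2 + 2 / c) ^ 2 - offset_sq (2 + c * c) Q) * (4 * c ^ 2 * (z + 2)))
      by (rewrite E2; field; nra).
    assert (0 < 4 * c ^ 2 * (z + 2)) by nra. nra.
Qed.

Lemma offset_sq_lt_quarter c Q : 0 < Q -> (Q + / Q) ^ 2 < 4 + 4 * c ^ 2 ->
  offset_sq (2 + c * c) Q < c * c / 4.
Proof.
  intros HQ Hz. pose proof (plus_inv_ge2 Q HQ).
  assert (0 < c * c / 4 - offset_sq (2 + c * c) Q).
  { rewrite quarter_sub_offset_sq by auto. apply Rdiv_lt_0_compat; lra. }
  lra.
Qed.

Lemma dbl_leaves_band c Q : 2 <= c -> 0 < Q -> in_band c Q ->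
  offset_sq (2 + c * c) ((Q * Q - 1) ^ 2 / (4 * curve_rhs (2 + c * c) Q)) < c * c / 4.
Proof.
  intros Hc HQ Hband.
  destruct (in_band_z c Q ltac:(lra) HQ Hband) as [Hz2 Hpoly].
  pose proof (plus_inv_ge2 Q HQ) as Hz.
  rewrite (dbl_x_in_z Q HQ) by nra.
  set (z := Q + / Q) in *.
  replace (z + (2 + c * c)) with (z + (2 + c ^ 2)) by ring.
  set (q := (z ^ 2 - 4) / (4 * (z + (2 + c ^ 2)))).
  assert (Hq : 0 < q) by (apply Rdiv_lt_0_compat; nra).
  apply offset_sq_lt_quarter; auto.
  apply plus_inv_sq_lt; [exact Hq | now apply dbl_z_lower | now apply dbl_z_upper].
Qed.

Definition good_offset (c Y : R) : Prop :=
  IsRat Y /\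
  (exists G, IsRat G /\ (c / 2 + Y) ^ 2 + 1 = G ^ 2) /\
  (exists G, IsRat G /\ (c / 2 - Y) ^ 2 + 1 = G ^ 2).

Definition good_abscissa (c X : R) : Prop :=
  IsRat X /\ 0 < X < c /\
  (exists G, IsRat G /\ X ^ 2 + 1 = G ^ 2) /\
  (exists G, IsRat G /\ (c - X) ^ 2 + 1 = G ^ 2).

Lemma good_offset_of_curve c Q w :
  w * w = curve_rhs (2 + c * c) Q -> 0 < Q -> IsRat c -> IsRat Q -> IsRat w ->
  good_offset c (offset Q w).
Proof.
  intros H HQ Rc RQ Rw.
  assert (Hsq : forall s, s = 1 \/ s = -1 ->
    (c / 2 + s * offset Q w) ^ 2 + 1
    = ((c * Q * (Q - 1) - s * w * (Q + 1)) / (2 * Q * (Q + 1))) ^ 2).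
  { intros s Hs. apply Rminus_diag_uniq.
    transitivity ((curve_rhs (2 + c * c) Q - w * w) / (Q * (Q + 1) ^ 2)).
    - destruct Hs as [-> | ->]; unfold offset, curve_rhs; field; lra.
    - rewrite H. field. lra. }
  repeat split.
  - unfold offset. israt.
  - eexists. split; [|rewrite <- (Rmult_1_l (offset Q w)); apply Hsq; lra].
    israt.
  - eexists. split; [|replace (c / 2 - offset Q w) with (c / 2 + -1 * offset Q w) by ring;
      apply Hsq; lra].
    israt.
Qed.

Lemma sq_shift_inv c g Y G : c * c / 4 + 1 = g * g -> Y <> 0 ->
  (c / 2 + Y) ^ 2 + 1 = G ^ 2 -> (c / 2 + g * g / Y) ^ 2 + 1 = (g * G / Y) ^ 2.
Proof.
  intros Hg HY H.
  replace ((g * G / Y) ^ 2) with (g * g * G ^ 2 / (Y * Y)) by (field; auto).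
  rewrite <- H, <- Hg. field. auto.
Qed.

Lemma good_offset_inv c g Y : c * c / 4 + 1 = g * g -> IsRat g -> Y <> 0 ->
  good_offset c Y -> good_offset c (g * g / Y).
Proof.
  intros Hg Rg HY (RY & (G1 & RG1 & E1) & (G2 & RG2 & E2)).
  repeat split.
  - israt.
  - exists (g * G1 / Y). split; [israt|]. now apply sq_shift_inv.
  - exists (g * G2 / - Y). split; [israt|].
    replace (c / 2 - g * g / Y) with (c / 2 + g * g / - Y) by (field; auto).
    apply sq_shift_inv; [auto | now apply Ropp_neq_0_compat |].
    rewrite <- E2. ring.
Qed.

Lemma good_abscissa_of_offset c Y : 0 < c -> IsRat c -> good_offset c Y ->
  Y * Y < c * c / 4 -> good_abscissa c (c / 2 + Y).
Proof.
  intros Hc Rc (RY & (G1 & RG1 & E1) & (G2 & RG2 & E2)) HY.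
  repeat split; try nra.
  - israt.
  - now exists G1.
  - exists G2. split; auto. rewrite <- E2. f_equal. field.
Qed.

Lemma inv_offset_small c g Y : 0 < c -> c * c / 4 + 1 = g * g ->
  (c / 2 + 2 / c) ^ 2 < Y * Y -> (g * g / Y) * (g * g / Y) < c * c / 4.
Proof.
  intros Hc Hg HY.
  assert (Hb : 0 < (c / 2 + 2 / c) ^ 2)
    by (apply pow_lt, Rplus_lt_0_compat; [lra | apply Rdiv_lt_0_compat; lra]).
  replace ((g * g / Y) * (g * g / Y)) with (g * g * (g * g) / (Y * Y)) by (field; nra).
  rewrite <- Hg. apply Rlt_div_l; [lra|].
  replace ((c * c / 4 + 1) * (c * c / 4 + 1)) with (c * c / 4 * (c / 2 + 2 / c) ^ 2)
    by (field; lra).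
  apply Rmult_lt_compat_l; nra.
Qed.

Definition choose_offset (c g Q w : R) : R :=
  if Rlt_dec (offset_sq (2 + c * c) Q) (c * c / 4) then offset Q w
  else g * g / offset Q w.

Lemma choose_offset_spec c g Q w : 2 <= c -> c * c / 4 + 1 = g * g ->
  w * w = curve_rhs (2 + c * c) Q -> 0 < Q ->
  IsRat c -> IsRat g -> IsRat Q -> IsRat w -> ~ in_band c Q ->
  good_abscissa c (c / 2 + choose_offset c g Q w) /\
  (choose_offset c g Q w * choose_offset c g Q w = offset_sq (2 + c * c) Q \/
   choose_offset c g Q w * choose_offset c g Q w
   = g * g * (g * g) / offset_sq (2 + c * c) Q).
Proof.
  intros Hc Hg H HQ Rc Rg RQ Rw Hband.
  pose proof (offset_sq_eq _ _ _ H HQ) as HY.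
  pose proof (good_offset_of_curve c Q w H HQ Rc RQ Rw) as Hgood.
  unfold choose_offset. destruct Rlt_dec as [Hlt|Hnlt].
  - rewrite HY. split; auto. apply good_abscissa_of_offset; auto; lra.
  - assert (Hbig : (c / 2 + 2 / c) ^ 2 < offset Q w * offset Q w).
    { rewrite HY. unfold in_band in Hband. lra. }
    assert (HY0 : offset Q w <> 0).
    { intro E. rewrite E in Hbig.
      assert (0 <= (c / 2 + 2 / c) ^ 2) by apply pow2_ge_0. lra. }
    split.
    + apply good_abscissa_of_offset; [lra | auto | |].
      * now apply good_offset_inv.
      * apply inv_offset_small; auto; lra.
    + right. rewrite <- HY. field. auto.
Qed.

Section Valuations.
Variables (A Q : R) (N : Z).
Hypothesis A_int : val2_ge A 0.
Hypothesis Q_val : val2 Q (-2 * N).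
Hypothesis N_pos : (1 <= N)%Z.

Let QQ_val : val2 (Q * Q) (-4 * N).
Proof. replace (-4 * N)%Z with (-2 * N + -2 * N)%Z by lia. now apply val2_mul. Qed.

Lemma val2_dbl_x : val2 ((Q * Q - 1) ^ 2 / (4 * curve_rhs A Q)) (-2 * N - 2).
Proof.
  assert (Hnum : val2 ((Q * Q - 1) ^ 2) (-4 * N + -4 * N)).
  { replace ((Q * Q - 1) ^ 2) with ((Q * Q + IZR (-1)) * (Q * Q + IZR (-1))) by ring.
    apply val2_mul; apply val2_plus_IZR; auto; lia. }
  assert (Hrhs : val2 (curve_rhs A Q) (-4 * N + -2 * N)).
  { unfold curve_rhs.
    apply val2_plus_ge with (-2 * N)%Z; [|now apply val2_ge_of_val2|lia].
    apply val2_plus_ge with (-4 * N)%Z; [now apply val2_mul | | lia].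
    replace (A * Q * Q) with (A * (Q * Q)) by ring.
    replace (-4 * N)%Z with (0 + -4 * N)%Z by lia.
    apply val2_ge_mul; auto. now apply val2_ge_of_val2. }
  replace (-2 * N - 2)%Z with ((-4 * N + -4 * N) - (2 + (-4 * N + -2 * N)))%Z by lia.
  apply val2_div; auto. apply val2_mul; auto using val2_four.
Qed.

Lemma val2_offset_sq : val2 (offset_sq A Q) (-2 * N - 2).
Proof.
  unfold offset_sq.
  assert (Hm : val2 (Q + IZR (-1)) (-2 * N)) by (apply val2_plus_IZR; auto; lia).
  assert (Hp : val2 (Q + IZR 1) (-2 * N)) by (apply val2_plus_IZR; auto; lia).
  assert (Hnum : val2 ((Q * Q + A * Q + 1) * ((Q - 1) * (Q - 1)))
                      (-4 * N + (-2 * N + -2 * N))).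
  { apply val2_mul.
    - apply val2_plus_ge with 0%Z; [|apply (val2_ge_IZR 1)|lia].
      apply val2_plus_ge with (-2 * N)%Z; auto; [|lia].
      replace (-2 * N)%Z with (0 + -2 * N)%Z by lia.
      apply val2_ge_mul; auto. now apply val2_ge_of_val2.
    - replace (Q - 1) with (Q + IZR (-1)) by ring. now apply val2_mul. }
  assert (Hden : val2 (4 * Q * ((Q + 1) * (Q + 1))) (2 + -2 * N + (-2 * N + -2 * N))).
  { apply val2_mul; [apply val2_mul; auto using val2_four|].
    replace (Q + 1) with (Q + IZR 1) by ring. now apply val2_mul. }
  replace (-2 * N - 2)%Z
    with ((-4 * N + (-2 * N + -2 * N)) - (2 + -2 * N + (-2 * N + -2 * N)))%Z by lia.
  now apply val2_div.
Qed.

End Valuations.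

Fixpoint dbl_iter (A Q0 w0 : R) (n : nat) : R * R :=
  match n with
  | O => (Q0, w0)
  | S k => let (Q, w) := dbl_iter A Q0 w0 k in (dbl_x A Q w, dbl_y A Q w)
  end.

Definition in_band_dec (c Q : R) : {in_band c Q} + {~ in_band c Q}.
Proof.
  unfold in_band.
  destruct (Rle_dec (c * c / 4) (offset_sq (2 + c * c) Q));
    destruct (Rle_dec (offset_sq (2 + c * c) Q) ((c / 2 + 2 / c) ^ 2));
    [left | right ..]; tauto.
Defined.

Definition midline_family (c : R) : Prop :=
  IsRat c /\ exists X : nat -> R,
    (forall n m, X n = X m -> n = m) /\ forall n, good_abscissa c (X n).

Section Abscissae.
Variables c g Q0 w0 : R.
Hypothesis c_ge2 : 2 <= c.
Hypothesis g_sq : c * c / 4 + 1 = g * g.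
Hypothesis c_rat : IsRat c.
Hypothesis g_rat : IsRat g.
Hypothesis A_int : val2_ge (2 + c * c) 0.
Hypothesis g_val : val2 (g * g) 0.
Hypothesis start_on_curve : w0 * w0 = curve_rhs (2 + c * c) Q0.
Hypothesis Q0_pos : 0 < Q0.
Hypothesis Q0_rat : IsRat Q0.
Hypothesis w0_rat : IsRat w0.
Hypothesis Q0_val : val2 Q0 (-4).

Let A := 2 + c * c.

Lemma dbl_iter_spec n : let (Q, w) := dbl_iter A Q0 w0 n in
  w * w = curve_rhs A Q /\ 0 < Q /\ IsRat Q /\ IsRat w /\
  val2 Q (-2 * (Z.of_nat n + 2)).
Proof.
  assert (RA : IsRat A) by (unfold A; israt).
  induction n as [|n IH]; [now repeat split|].
  simpl. destruct (dbl_iter A Q0 w0 n) as [Q w]. destruct IH as (H & HQ & RQ & Rw & VQ).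
  assert (Hw : w <> 0).
  { intro E. rewrite E in H. unfold curve_rhs, A in H. nra. }
  destruct (IsRat_dbl A Q w RA RQ Rw) as [RQ' Rw'].
  assert (VQ' : val2 (dbl_x A Q w) (-2 * (Z.of_nat (S n) + 2))).
  { rewrite dbl_x_eq by auto.
    replace (-2 * (Z.of_nat (S n) + 2))%Z with (-2 * (Z.of_nat n + 2) - 2)%Z by lia.
    apply val2_dbl_x; auto. lia. }
  repeat split; auto using dbl_on_curve.
  assert (0 <= dbl_x A Q w).
  { rewrite dbl_x_eq by auto. apply Rle_mult_inv_pos; [apply pow2_ge_0|].
    rewrite <- H. unfold curve_rhs, A in *. nra. }
  pose proof (val2_neq0 _ _ VQ'). lra.
Qed.

Definition abscissa_at (n : nat) : R :=
  let (Q, w) := dbl_iter A Q0 w0 n in c / 2 + choose_offset c g Q w.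

Lemma abscissa_at_spec n : ~ in_band c (fst (dbl_iter A Q0 w0 n)) ->
  good_abscissa c (abscissa_at n) /\
  exists e, Z.abs e = (2 * Z.of_nat n + 6)%Z /\
            val2 ((abscissa_at n - c / 2) * (abscissa_at n - c / 2)) e.
Proof.
  pose proof (dbl_iter_spec n) as Hn. unfold abscissa_at.
  destruct (dbl_iter A Q0 w0 n) as [Q w]. cbn [fst].
  intros Hband. destruct Hn as (H & HQ & RQ & Rw & VQ).
  destruct (choose_offset_spec c g Q w c_ge2 g_sq H HQ c_rat g_rat RQ Rw Hband)
    as [Hgood HY].
  replace (c / 2 + choose_offset c g Q w - c / 2) with (choose_offset c g Q w) by ring.
  split; auto.
  assert (Vh : val2 (offset_sq A Q) (-2 * (Z.of_nat n + 2) - 2))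
    by (apply val2_offset_sq; auto; lia).
  destruct HY as [E|E]; rewrite E.
  - exists (-2 * (Z.of_nat n + 2) - 2)%Z. split; [lia | exact Vh].
  - exists ((0 + 0) - (-2 * (Z.of_nat n + 2) - 2))%Z. split; [lia|].
    apply val2_div; auto. now apply val2_mul.
Qed.

Definition abscissa (k : nat) : R :=
  if in_band_dec c (fst (dbl_iter A Q0 w0 (2 * k))) then abscissa_at (S (2 * k))
  else abscissa_at (2 * k).

Lemma abscissa_spec k : exists j, (j = 2 * k \/ j = S (2 * k))%nat /\
  good_abscissa c (abscissa k) /\
  exists e, Z.abs e = (2 * Z.of_nat j + 6)%Z /\
            val2 ((abscissa k - c / 2) * (abscissa k - c / 2)) e.
Proof.
  unfold abscissa. destruct in_band_dec as [Hband|Hband].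
  - exists (S (2 * k)). split; [now right|]. apply abscissa_at_spec.
    pose proof (dbl_iter_spec (2 * k)) as Hk. cbn [dbl_iter].
    destruct (dbl_iter A Q0 w0 (2 * k)) as [Q w]. cbn [fst] in *.
    destruct Hk as (H & HQ & _ & _ & _). intros Hband'.
    assert (Hw : w <> 0) by (intro E; rewrite E in H; unfold curve_rhs, A in H; nra).
    unfold in_band in Hband'. rewrite dbl_x_eq in Hband' by auto.
    pose proof (dbl_leaves_band c Q c_ge2 HQ Hband). unfold A in *. lra.
  - exists (2 * k)%nat. split; [now left|]. now apply abscissa_at_spec.
Qed.

Lemma abscissa_inj k1 k2 : abscissa k1 = abscissa k2 -> k1 = k2.
Proof.
  intros E.
  destruct (abscissa_spec k1) as (j1 & Hj1 & _ & e1 & He1 & V1).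
  destruct (abscissa_spec k2) as (j2 & Hj2 & _ & e2 & He2 & V2).
  rewrite E in V1. pose proof (val2_unique _ _ _ V1 V2). subst e2.
  lia.
Qed.

Lemma midline_family_of_start : midline_family c.
Proof.
  split; auto. exists abscissa. split; [exact abscissa_inj|].
  intros k. now destruct (abscissa_spec k) as (j & _ & Hk & _).
Qed.

End Abscissae.

(** * Starting points *)

Lemma half_diff_inv_sq t : t <> 0 ->
  (t - / t) * (t - / t) / 4 + 1 = (t * t + 1) / (2 * t) * ((t * t + 1) / (2 * t)).
Proof. intros. field. auto. Qed.

Section NegativePoint.
Variables t r : R.
Hypothesis t_neq0 : t <> 0.
Hypothesis r_sq : r * r = t * t + t + 1.
Let A := 2 + (t - / t) * (t - / t).

Lemma neg_on_curve : ((t - 1) * r) * ((t - 1) * r) = curve_rhs A (- t).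
Proof.
  replace ((t - 1) * r * ((t - 1) * r)) with ((t - 1) * (t - 1) * (r * r)) by ring.
  rewrite r_sq. unfold A, curve_rhs. field. auto.
Qed.

Lemma neg_dbl_x : t - 1 <> 0 -> r <> 0 ->
  dbl_x A (- t) ((t - 1) * r) = (t + 1) * (t + 1) / (4 * (r * r)).
Proof.
  intros Ht1 Hr.
  rewrite dbl_x_eq by (apply neg_on_curve || now apply Rmult_integral_contrapositive_currified).
  rewrite <- neg_on_curve. field. auto.
Qed.

End NegativePoint.

(* [tau_jq j q] parametrizes the conic r^2 = t^2 + t + 1, with
   r = (16 j^2 - 4 j q + q^2) / (q^2 - 16 j^2). *)
Definition tau_jq (j q : Z) : R := IZR ((8 * j - q) * q) / IZR (q * q - 16 * j * j).
Definition c_jq (j q : Z) : R := tau_jq j q - / tau_jq j q.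

Ltac zodd Hj Hq := repeat (rewrite ?Z.odd_add, ?Z.odd_sub, ?Z.odd_mul, ?Hj, ?Hq); reflexivity.

Section StartPoint.
Variables j q : Z.
Hypothesis j_odd : Z.odd j = true.
Hypothesis q_odd : Z.odd q = true.

Let a0 := ((8 * j - q) * q)%Z.
Let b0 := (q * q - 16 * j * j)%Z.
Let r0 := (16 * j * j - 4 * j * q + q * q)%Z.
Let t := tau_jq j q.
Let r := IZR r0 / IZR b0.
Let c := c_jq j q.
Let A := 2 + c * c.

Let a0_odd : Z.odd a0 = true. Proof. unfold a0. zodd j_odd q_odd. Qed.
Let b0_odd : Z.odd b0 = true. Proof. unfold b0. zodd j_odd q_odd. Qed.
Let r0_odd : Z.odd r0 = true. Proof. unfold r0. zodd j_odd q_odd. Qed.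
Let a0_neq0 := IZR_odd_neq0 a0 a0_odd.
Let b0_neq0 := IZR_odd_neq0 b0 b0_odd.

Let t_neq0 : t <> 0.
Proof. apply Rmult_integral_contrapositive_currified; auto with real. Qed.

Let r_neq0 : r <> 0.
Proof.
  apply Rmult_integral_contrapositive_currified;
    auto using IZR_odd_neq0 with real.
Qed.

Let r_sq : r * r = t * t + t + 1.
Proof.
  assert (E : IZR (r0 * r0) = IZR (a0 * a0 + a0 * b0 + b0 * b0))
    by (f_equal; unfold r0, a0, b0; ring).
  rewrite !plus_IZR, !mult_IZR in E.
  unfold r, t, tau_jq. fold a0 b0.
  apply Rmult_eq_reg_r with (IZR b0 * IZR b0);
    [|now apply Rmult_integral_contrapositive_currified].
  transitivity (IZR r0 * IZR r0); [field; auto|]. rewrite E. field. auto.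
Qed.

Let t_plus1_neq0 : t + 1 <> 0.
Proof.
  unfold t, tau_jq. fold a0 b0. intro E.
  assert (E' : IZR (a0 + b0) = 0).
  { rewrite plus_IZR. replace (IZR a0) with ((IZR a0 / IZR b0 + 1 - 1) * IZR b0)
      by (field; auto). rewrite E. ring. }
  apply eq_IZR_R0 in E'. unfold a0, b0 in E'.
  destruct (proj1 (Z.odd_spec j) j_odd) as [x ->].
  destruct (proj1 (Z.odd_spec q) q_odd) as [y ->]. lia.
Qed.

Let c_rat : IsRat c.
Proof. unfold c, c_jq, tau_jq. israt. Qed.

Let A_int : val2_ge A 0.
Proof.
  assert (Hc : val2_ge c 0).
  { exists (a0 * a0 - b0 * b0)%Z, (a0 * b0)%Z. split; [now apply Z_odd_mul|].
    unfold c, c_jq, tau_jq. fold a0 b0.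
    rewrite minus_IZR, !mult_IZR. simpl powerRZ. field. auto. }
  apply val2_ge_plus; [apply (val2_ge_IZR 2)|].
  replace 0%Z with (0 + 0)%Z by reflexivity. now apply val2_ge_mul.
Qed.

Let g := (t * t + 1) / (2 * t).

Let g_rat : IsRat g.
Proof. unfold g, t, tau_jq. israt. Qed.

Let g_val : val2 (g * g) 0.
Proof.
  assert (Hg : val2 g 0).
  { destruct (proj1 (Z.odd_spec a0) a0_odd) as [x Hx].
    destruct (proj1 (Z.odd_spec b0) b0_odd) as [y Hy].
    set (o := (2 * (x * x + x + y * y + y) + 1)%Z).
    exists o, (a0 * b0)%Z.
    repeat split; [apply Z.odd_spec; eexists; reflexivity|now apply Z_odd_mul|].
    assert (Eo : IZR o = (IZR a0 * IZR a0 + IZR b0 * IZR b0) / 2).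
    { rewrite <- !mult_IZR, <- plus_IZR.
      replace (a0 * a0 + b0 * b0)%Z with (2 * o)%Z by (unfold o; rewrite Hx, Hy; ring).
      rewrite mult_IZR. field. }
    unfold g, t, tau_jq. fold a0 b0.
    rewrite Eo, mult_IZR. simpl powerRZ. field. auto. }
  replace 0%Z with (0 + 0)%Z by reflexivity. now apply val2_mul.
Qed.

Hypothesis c_ge2 : 2 <= c.

Let t_sub1_neq0 : t - 1 <> 0.
Proof.
  intro E. unfold c, c_jq in c_ge2. fold t in c_ge2.
  replace t with 1 in c_ge2 by lra. rewrite Rinv_1 in c_ge2. lra.
Qed.

Let A_eq : A = 2 + (t - / t) * (t - / t).
Proof. reflexivity. Qed.

Let w := (t - 1) * r.
Let Q2 := dbl_x A (- t) w.

Let w_rat : IsRat w.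
Proof. unfold w, r, t, tau_jq. israt. Qed.

Let Q2_eq : Q2 = (t + 1) * (t + 1) / (4 * (r * r)).
Proof. unfold Q2, w. rewrite A_eq. now apply neg_dbl_x. Qed.

Let Q2_pos : 0 < Q2.
Proof.
  rewrite Q2_eq. apply Rdiv_lt_0_compat; [|apply Rmult_lt_0_compat; [lra|]];
    apply Rsqr_pos_lt; auto.
Qed.

Let inv_Q2_val : val2 (/ Q2) (-4).
Proof.
  exists (r0 * r0)%Z, (j * j * (q - 2 * j) * (q - 2 * j))%Z.
  repeat split; [now apply Z_odd_mul | zodd j_odd q_odd |].
  assert (Ej : IZR j <> 0) by now apply IZR_odd_neq0.
  assert (Eqj : IZR (q - 2 * j) <> 0) by (apply IZR_odd_neq0; zodd j_odd q_odd).
  assert (Et : t + 1 = IZR (8 * j * (q - 2 * j)) / IZR b0).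
  { unfold t, tau_jq. fold a0 b0. apply Rmult_eq_reg_r with (IZR b0); auto.
    transitivity (IZR (a0 + b0)); [rewrite plus_IZR; field; auto|].
    transitivity (IZR (8 * j * (q - 2 * j))); [f_equal; unfold a0, b0; ring|].
    field. auto. }
  rewrite Q2_eq, Et. unfold r. rewrite !mult_IZR in *. simpl powerRZ.
  field. repeat split; auto using IZR_odd_neq0.
Qed.

Lemma midline_family_c_jq : midline_family c.
Proof.
  assert (Hon : w * w = curve_rhs A (- t)) by (unfold w; rewrite A_eq; now apply neg_on_curve).
  assert (Hw : w <> 0) by now apply Rmult_integral_contrapositive_currified.
  assert (RA : IsRat A) by (unfold A; israt).
  destruct (IsRat_dbl A (- t) w RA ltac:(unfold t, tau_jq; israt) w_rat) as [RQ2 Rw2].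
  apply (midline_family_of_start c g (/ Q2) (- dbl_y A (- t) w / (Q2 * Q2))); auto.
  - unfold g, c. apply half_diff_inv_sq; auto.
  - apply inv_on_curve; [now apply dbl_on_curve | lra].
  - now apply Rinv_0_lt_compat.
  - israt.
  - israt.
Qed.

End StartPoint.

(** * Density *)

Definition tau_of_m (m : R) : R := (2 * m - 1) / (1 - m * m).
Definition c_of_m (m : R) : R := tau_of_m m - / tau_of_m m.

Lemma c_jq_eq j q : Z.odd j = true -> Z.odd q = true ->
  c_jq j q = c_of_m (IZR (4 * j) / IZR q).
Proof.
  intros Hj Hq.
  assert (Nq : IZR q <> 0) by now apply IZR_odd_neq0.
  assert (Nb : IZR (q * q - 16 * j * j) <> 0) by (apply IZR_odd_neq0; zodd Hj Hq).
  assert (E : tau_of_m (IZR (4 * j) / IZR q) = tau_jq j q).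
  { unfold tau_of_m, tau_jq. rewrite !mult_IZR, !minus_IZR, !mult_IZR in *.
    field. auto. }
  unfold c_jq, c_of_m. now rewrite E.
Qed.

Lemma tau_of_m_lt m1 m2 : 1 / 2 < m1 -> m1 < m2 -> m2 < 1 ->
  0 < tau_of_m m1 < tau_of_m m2.
Proof.
  intros H1 H12 H2. unfold tau_of_m. split; [apply Rdiv_lt_0_compat; nra|].
  apply Rlt_0_minus.
  replace ((2 * m2 - 1) / (1 - m2 * m2) - (2 * m1 - 1) / (1 - m1 * m1))
    with ((m2 - m1) * (2 - m1 - m2 + 2 * m1 * m2) / ((1 - m1 * m1) * (1 - m2 * m2)))
    by (field; split; nra).
  apply Rdiv_lt_0_compat; apply Rmult_lt_0_compat; nra.
Qed.

Lemma c_of_m_lt m1 m2 : 1 / 2 < m1 -> m1 < m2 -> m2 < 1 -> c_of_m m1 < c_of_m m2.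
Proof.
  intros H1 H12 H2. destruct (tau_of_m_lt m1 m2) as [T1 T12]; auto.
  unfold c_of_m. assert (/ tau_of_m m2 < / tau_of_m m1) by (apply Rinv_lt_contravar; nra).
  lra.
Qed.

Lemma diff_inv_onto x : exists t, 0 < t /\ t - / t = x.
Proof.
  set (s := sqrt (x * x + 4)).
  assert (Hs2 : s * s = x * x + 4) by (apply sqrt_sqrt; nra).
  assert (Hs : 0 <= s) by apply sqrt_pos.
  exists ((x + s) / 2). assert (0 < x + s) by nra. split; [lra|].
  apply Rmult_eq_reg_r with (x + s); [|lra].
  field_simplify; [nra|lra].
Qed.

Lemma tau_of_m_onto t : 0 < t -> exists m, 1 / 2 < m < 1 /\ tau_of_m m = t.
Proof.
  intros Ht. set (R0 := sqrt (t * t + t + 1)).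
  assert (HR2 : R0 * R0 = t * t + t + 1) by (apply sqrt_sqrt; nra).
  assert (HR0 : 0 <= R0) by apply sqrt_pos.
  assert (HRlo : t + 2 < 2 * R0) by nra.
  assert (HRhi : R0 < t + 1) by nra.
  exists ((R0 - 1) / t). repeat split.
  - apply Rlt_div_r; lra.
  - apply Rlt_div_l; lra.
  - unfold tau_of_m.
    replace (1 - (R0 - 1) / t * ((R0 - 1) / t)) with ((2 * R0 - t - 2) / (t * t)).
    2:{ apply Rminus_diag_uniq. transitivity ((R0 * R0 - (t * t + t + 1)) / (t * t)).
        - field. lra.
        - rewrite HR2. field. lra. }
    field. split; lra.
Qed.

Lemma c_of_m_onto x : exists m, 1 / 2 < m < 1 /\ c_of_m m = x.
Proof.
  destruct (diff_inv_onto x) as (t & Ht & <-).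
  destruct (tau_of_m_onto t Ht) as (m & Hm & Em).
  exists m. split; auto. unfold c_of_m. now rewrite Em.
Qed.

Lemma exists_odd_between x : exists j, Z.odd j = true /\ x < IZR j <= x + 2.
Proof.
  destruct (archimed x) as [Hk1 Hk2].
  destruct (Z.odd (up x)) eqn:E.
  - exists (up x). split; auto. lra.
  - exists (up x + 1)%Z. rewrite Z.odd_add, E, plus_IZR. split; auto. lra.
Qed.

Lemma odd_ratio_dense al be : al < be ->
  exists j q : Z, Z.odd j = true /\ Z.odd q = true /\ al < IZR (4 * j) / IZR q < be.
Proof.
  intros Hab.
  destruct (exists_odd_between (8 / (be - al))) as (q & Oq & Hq & _).
  assert (0 < 8 / (be - al)) by (apply Rdiv_lt_0_compat; lra).
  assert (Hsmall : 8 < (be - al) * IZR q).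
  { apply Rmult_lt_reg_r with (/ (be - al)); [apply Rinv_0_lt_compat; lra|].
    replace ((be - al) * IZR q * / (be - al)) with (IZR q) by (field; lra). exact Hq. }
  destruct (exists_odd_between (al * IZR q / 4)) as (j & Oj & Hj1 & Hj2).
  exists j, q. repeat split; auto; rewrite mult_IZR.
  - apply Rlt_div_r; [lra|].
    replace (al * IZR q) with (4 * (al * IZR q / 4)) by field. lra.
  - apply Rlt_div_l; [lra|].
    nra.
Qed.

Lemma midline_family_dense L U : 2 <= L -> L < U ->
  exists c, L < c < U /\ midline_family c.
Proof.
  intros HL HLU.
  destruct (c_of_m_onto L) as (mL & HmL & EL).
  destruct (c_of_m_onto U) as (mU & HmU & EU).
  assert (HmLU : mL < mU).
  { destruct (Rlt_or_le mL mU) as [H|[H|H]]; auto.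
    - pose proof (c_of_m_lt mU mL ltac:(lra) H ltac:(lra)). lra.
    - subst. lra. }
  destruct (odd_ratio_dense mL mU HmLU) as (j & q & Oj & Oq & Hm).
  assert (Hc : L < c_jq j q < U).
  { rewrite c_jq_eq, <- EL, <- EU by auto. split; apply c_of_m_lt; lra. }
  exists (c_jq j q). split; auto. apply midline_family_c_jq; auto. lra.
Qed.

Lemma injective_infinite (P : R * R -> Prop) (f : nat -> R * R) :
  (forall n, P (f n)) -> (forall n m, f n = f m -> n = m) -> infinite_set P.
Proof.
  intros HP Hinj l. apply NNPP. intro Hno.
  assert (Hincl : incl (map f (seq 0 (S (length l)))) l).
  { intros p Hp. apply in_map_iff in Hp as (n & <- & _).
    apply NNPP. intro Hn. apply Hno. exists (f n). auto. }
  apply NoDup_incl_length in Hincl.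
  - rewrite length_map, length_seq in Hincl. lia.
  - apply NoDup_map_NoDup_ForallPairs; [|apply seq_NoDup].
    intros x y _ _ E. now apply Hinj.
Qed.

Lemma good_point_half c X : 0 < c -> IsRat c -> good_abscissa c X ->
  good_point (c / 2) (X / 2, 1 / 2).
Proof.
  intros Hc Rc (RX & HX & (G1 & RG1 & E1) & (G2 & RG2 & E2)).
  unfold good_point, dist2. cbn [fst snd].
  repeat split; try lra; try israt.
  all: first
    [ apply IsRat_sqrt_square with (G1 / 2); [israt|];
      replace ((G1 / 2) ^ 2) with (G1 ^ 2 / 4) by field; rewrite <- E1; field
    | apply IsRat_sqrt_square with (G2 / 2); [israt|];
      replace ((G2 / 2) ^ 2) with (G2 ^ 2 / 4) by field; rewrite <- E2; field ].
Qed.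

Lemma good_point_two_div c X : 0 < c -> IsRat c -> good_abscissa c X ->
  good_point (2 / c) (1 / c, X / c).
Proof.
  intros Hc Rc (RX & HX & (G1 & RG1 & E1) & (G2 & RG2 & E2)).
  unfold good_point, dist2. cbn [fst snd].
  assert (Hc' : 0 < / c) by now apply Rinv_0_lt_compat.
  repeat split; try israt; try (apply Rdiv_lt_0_compat; lra);
    try (apply Rlt_div_l; lra); try (apply Rmult_lt_compat_r; lra).
  all: first
    [ apply IsRat_sqrt_square with (G1 / c); [israt|];
      replace ((G1 / c) ^ 2) with (G1 ^ 2 / c ^ 2) by (field; lra); rewrite <- E1;
      field; lra
    | apply IsRat_sqrt_square with (G2 / c); [israt|];
      replace ((G2 / c) ^ 2) with (G2 ^ 2 / c ^ 2) by (field; lra); rewrite <- E2;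
      field; lra ].
Qed.

Lemma S_good_half c : 0 < c -> midline_family c -> S_good (c / 2).
Proof.
  intros Hc (Rc & X & Xinj & XG). repeat split; [israt | lra |].
  apply (injective_infinite _ (fun n => (X n / 2, 1 / 2))).
  - intros n. now apply good_point_half.
  - intros n m E. injection E as E. apply Xinj. lra.
Qed.

Lemma S_good_two_div c : 0 < c -> midline_family c -> S_good (2 / c).
Proof.
  intros Hc (Rc & X & Xinj & XG). repeat split; [israt | apply Rdiv_lt_0_compat; lra |].
  apply (injective_infinite _ (fun n => (1 / c, X n / c))).
  - intros n. now apply good_point_two_div.
  - intros n m E. injection E as E. apply Xinj.
    apply Rmult_eq_reg_r with (/ c); [exact E | apply Rinv_neq_0_compat; lra].
Qed.

Lemma S_good_between_gt1 u v : 1 < v -> u < v -> exists a, S_good a /\ u < a < v.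
Proof.
  intros Hv Huv. pose proof (Rmax_r u 1). pose proof (Rmax_l u 1).
  assert (Rmax u 1 < v) by (apply Rmax_lub_lt; lra).
  destruct (midline_family_dense (2 * Rmax u 1) (2 * v)) as (c & Hc & Hfam); try lra.
  exists (c / 2). split; [apply S_good_half|]; auto; lra.
Qed.

Lemma S_good_between_le1 u v : 0 <= u -> u < v -> v <= 1 ->
  exists a, S_good a /\ u < a < v.
Proof.
  intros Hu Huv Hv.
  assert (H2v : 2 <= 2 / v).
  { apply Rmult_le_reg_r with v; [lra|]. replace (2 / v * v) with 2 by (field; lra). nra. }
  destruct (midline_family_dense (2 / v) (4 / (u + v))) as (c & [Hc1 Hc2] & Hfam); auto.
  - apply Rlt_div_r; [lra|]. replace (2 / v * (u + v)) with (2 * (u + v) / v) by (field; lra).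
    apply Rlt_div_l; lra.
  - assert (Hc : 0 < c) by lra.
    assert (Hvc : 2 < v * c) by (replace 2 with (2 / v * v) by (field; lra); nra).
    assert (Huvc : c * (u + v) < 4)
      by (replace 4 with (4 / (u + v) * (u + v)) by (field; lra); nra).
    exists (2 / c). split; [now apply S_good_two_div|].
    split; [apply Rlt_div_r | apply Rlt_div_l]; nra.
Qed.

Theorem theorem2p3 :
  forall u v : R, 0 <= u -> u < v -> exists a : R, S_good a /\ u < a < v.
Proof.
  intros u v Hu Huv.
  destruct (Rlt_or_le 1 v) as [Hv|Hv].
  - now apply S_good_between_gt1.
  - now apply S_good_between_le1.
Qed.
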